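(* Assume: (H1) there exist real numbers $M_1<M_2$ such that for every $u\in C^1$: $\int_0^T f(t,u(t),u'(t))\,dt\neq0$ whenever $\min_{[0,T]}u'\ge M_2$, and $\int_0^T f(t,u(t),u'(t))\,dt\neq0$ whenever $\max_{[0,T]}u'\le M_1$; (H2) there exists $c\in C$ such that $f(t,x,y)\ge c(t)$ for all $(t,x,y)\in[0,T]\times\mathbb{R}\times\mathbb{R}$, and $L+2\|c^-\|_{L^1}<a$, where $L=\max\{|\varphi(M_2)|,|\varphi(M_1)|\}$. Let $r=\max\{|\varphi^{-1}(L+2\|c^-\|_{L^1})|,\ |\varphi^{-1}(-L-2\|c^-\|_{L^1})|\}$. If $(\lambda,u)\in\Omega$ satisfies $u=M(\lambda,u)$, then $$\|\lambda H(N_f(u)-Q(N_f(u)))+\varphi(P(u))\|_\infty<L+2\|c^-\|_{L^1}\quad\text{and}\quad \|u\|_1<r(2+T).$$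
   Context: Let $T>0$, $a>0$, let $\varphi:\mathbb{R}\to(-a,a)$ be a homeomorphism with $\varphi(0)=0$, and let $f:[0,T]\times\mathbb{R}\times\mathbb{R}\to\mathbb{R}$ be continuous. $C=C([0,T],\mathbb{R})$ carries the sup norm $\|\cdot\|_\infty$; $C^1=C^1([0,T],\mathbb{R})$ carries the norm $\|u\|_1=\|u\|_\infty+\|u'\|_\infty$; $\|\cdot\|_{L^1}$ is the norm of $L^1([0,T])$, and $c^-=\max\{-c,0\}$. Define $N_f:C^1\to C$, $N_f(u)(t)=f(t,u(t),u'(t))$; $H:C\to C^1$, $H(v)(t)=\int_0^t v(s)\,ds$; $Q:C\to C$, $Q(v)(t)=\frac1T\int_0^T v(s)\,ds$ (a constant function); $P:C\to C$, $P(u)(t)=u(0)$ (a constant function). For $v\in C$ with $\|v\|_\infty<a$, $\varphi^{-1}(v)\in C$ denotes $t\mapsto\varphi^{-1}(v(t))$, and $\varphi(v)$ is defined pointwise similarly. Let $$\Omega=\{(\lambda,u)\in[0,1]\times C^1:\ \|\lambda H(N_f(u)-Q(N_f(u)))+\varphi(P(u))\|_\infty<a\},$$ and for $(\lambda,u)\in\Omega$ let $$M(\lambda,u)=P(u)+Q(N_f(u))+H\big(\varphi^{-1}[\lambda H(N_f(u)-Q(N_f(u)))+\varphi(P(u))]\big).$$ *)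

From Stdlib Require Import Reals Lra ClassicalEpsilon.
Open Scope R_scope.

Definition integ (f : R -> R) (a b : R) : R :=
  match excluded_middle_informative (exists pr : Riemann_integrable f a b, True) with
  | left H =>
      let pr := proj1_sig (constructive_indefinite_description _ H) in RiemannInt pr
  | right _ => 0
  end.

Definition supnorm (T : R) (v : R -> R) : R :=
  match excluded_middle_informative
          (exists s, is_lub (fun y => exists t, 0 <= t <= T /\ y = Rabs (v t)) s) with
  | left H => proj1_sig (constructive_indefinite_description _ H)
  | right _ => 0
  end.

Definition cont_on (T : R) (g : R -> R) : Prop :=
  forall t, 0 <= t <= T -> forall eps, 0 < eps -> exists del, 0 < del /\
    forall s, 0 <= s <= T -> Rabs (s - t) < del -> Rabs (g s - g t) < eps.

Definition cont3_on (T : R) (f : R -> R -> R -> R) : Prop :=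
  forall t x y, 0 <= t <= T -> forall eps, 0 < eps -> exists del, 0 < del /\
    forall t' x' y', 0 <= t' <= T -> Rabs (t' - t) < del -> Rabs (x' - x) < del ->
      Rabs (y' - y) < del -> Rabs (f t' x' y' - f t x y) < eps.

Definition has_deriv_on (T : R) (u u' : R -> R) : Prop :=
  forall t, 0 <= t <= T -> forall eps, 0 < eps -> exists del, 0 < del /\
    forall s, 0 <= s <= T -> s <> t -> Rabs (s - t) < del ->
      Rabs ((u s - u t) / (s - t) - u' t) < eps.

Definition C1_on (T : R) (u u' : R -> R) : Prop :=
  has_deriv_on T u u' /\ cont_on T u'.

Definition Nf (f : R -> R -> R -> R) (u u' : R -> R) : R -> R := fun t => f t (u t) (u' t).
Definition Hop (v : R -> R) : R -> R := fun t => integ v 0 t.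
Definition Qop (T : R) (v : R -> R) : R := / T * integ v 0 T.
Definition Pop (u : R -> R) : R := u 0.

Definition Wop (T : R) (phi : R -> R) (f : R -> R -> R -> R) (lam : R) (u u' : R -> R)
  : R -> R :=
  fun t => lam * Hop (fun s => Nf f u u' s - Qop T (Nf f u u')) t + phi (Pop u).

Definition Mop (T : R) (phi phiinv : R -> R) (f : R -> R -> R -> R) (lam : R) (u u' : R -> R)
  : R -> R :=
  fun t => Pop u + Qop T (Nf f u u') + Hop (fun s => phiinv (Wop T phi f lam u u' s)) t.

From Stdlib Require Import Reals Lra Classical ClassicalEpsilon.
From Coquelicot Require Import Coquelicot.
Open Scope R_scope.

(* At t = 0 the fixed-point equation forces Q(N_f u) = 0, so
   w := lam H(N_f u - Q(N_f u)) + phi(u 0) equals phi(u 0) + lam * int_0^t N_f u,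
   and differentiating the fixed-point equation gives u' = phi^-1(w), i.e. phi(u') = w.
   By (H1) and the intermediate value theorem u'(tau) lies in (M1, M2) for some tau,
   so |w(tau)| < L because phi, being continuous and injective, is monotone.  Since
   int_0^T N_f u = 0 and N_f u >= -c^-, we get int_0^T |N_f u| <= 2 |c^-|_L1, hence
   |w| < L + 2 |c^-|_L1 everywhere; inverting phi bounds |u'| by r.  Finally
   w(0) = phi(u 0) gives u 0 = u' 0, so |u| < r + T r. *)

(* Precomposing with [clamp T] extends a function on [0,T] constantly to all of R, so
   that the library results for functions continuous on R apply. *)
Definition clamp (T x : R) : R := Rmin T (Rmax 0 x).

Lemma clamp_in T x : 0 <= T -> 0 <= clamp T x <= T.
Proof. unfold clamp, Rmin, Rmax; repeat destruct Rle_dec; lra. Qed.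

Lemma clamp_id T x : 0 <= x <= T -> clamp T x = x.
Proof. unfold clamp, Rmin, Rmax; repeat destruct Rle_dec; lra. Qed.

Lemma clamp_lipschitz T x y : 0 <= T -> Rabs (clamp T x - clamp T y) <= Rabs (x - y).
Proof.
  unfold clamp, Rmin, Rmax; repeat destruct Rle_dec; unfold Rabs; repeat destruct Rcase_abs; lra.
Qed.

Lemma cont_on_clamp_continuity T g : 0 <= T -> cont_on T g -> continuity (fun x => g (clamp T x)).
Proof.
  intros HT Hg x eps Heps.
  destruct (Hg (clamp T x) (clamp_in T x HT) eps Heps) as [d [Hd Hgd]].
  exists d; split; [exact Hd|]. intros y [_ Hy]; simpl in *; unfold R_dist in *.
  apply Hgd; [apply clamp_in; exact HT|].
  eapply Rle_lt_trans; [apply clamp_lipschitz; exact HT | exact Hy].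
Qed.

Lemma cont_on_ex_RInt T g s t :
  0 <= T -> cont_on T g -> 0 <= s <= T -> 0 <= t <= T -> ex_RInt g s t.
Proof.
  intros HT Hg Hs Ht.
  apply ex_RInt_ext with (f := fun x => g (clamp T x)).
  { intros x Hx. rewrite clamp_id; [reflexivity|].
    unfold Rmin, Rmax in Hx; destruct Rle_dec in Hx; lra. }
  apply (@ex_RInt_continuous R_CompleteNormedModule). intros z _.
  apply continuity_pt_filterlim, cont_on_clamp_continuity; assumption.
Qed.

Lemma integ_RInt g a b : ex_RInt g a b -> integ g a b = RInt g a b.
Proof.
  intros H. unfold integ.
  destruct (excluded_middle_informative _) as [Hint|Hnot].
  - symmetry; apply RInt_Reals.
  - exfalso; apply Hnot. exists (ex_RInt_Reals_0 _ _ _ H); trivial.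
Qed.

Lemma integ_point g x : integ g x x = 0.
Proof.
  rewrite integ_RInt by apply ex_RInt_point. apply (@RInt_point R_CompleteNormedModule).
Qed.

Lemma cont_on_ext T g h :
  (forall t, 0 <= t <= T -> g t = h t) -> cont_on T g -> cont_on T h.
Proof.
  intros E Hg t Ht eps He. destruct (Hg t Ht eps He) as [d [Hd Hgd]].
  exists d; split; [exact Hd|]. intros s Hs Hst. rewrite <- !E by assumption. auto.
Qed.

Lemma cont_on_comp T g F :
  cont_on T g -> (forall t, 0 <= t <= T -> continuity_pt F (g t)) ->
  cont_on T (fun t => F (g t)).
Proof.
  intros Hg HF t Ht eps He.
  destruct (HF t Ht eps He) as [alp [Halp HFalp]].
  destruct (Hg t Ht alp Halp) as [d [Hd Hgd]].
  exists d; split; [exact Hd|]. intros s Hs Hst.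
  destruct (Req_dec (g s) (g t)) as [E|E].
  - rewrite E, Rminus_diag, Rabs_R0; exact He.
  - apply (HFalp (g s)). split; [split; [constructor|auto] | apply Hgd; auto].
Qed.

Lemma cont_on_comp_lipschitz T g F :
  cont_on T g -> (forall x y, Rabs (F x - F y) <= Rabs (x - y)) ->
  cont_on T (fun t => F (g t)).
Proof.
  intros Hg HF t Ht eps He. destruct (Hg t Ht eps He) as [d [Hd Hgd]].
  exists d; split; [exact Hd|]. intros s Hs Hst.
  eapply Rle_lt_trans; [apply HF | auto].
Qed.

Lemma cont3_on_comp T f u v :
  cont3_on T f -> cont_on T u -> cont_on T v -> cont_on T (fun t => f t (u t) (v t)).
Proof.
  intros Hf Hu Hv t Ht eps He.
  destruct (Hf t (u t) (v t) Ht eps He) as [d [Hd Hfd]].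
  destruct (Hu t Ht d Hd) as [du [Hdu Hud]].
  destruct (Hv t Ht d Hd) as [dv [Hdv Hvd]].
  exists (Rmin d (Rmin du dv)); split; [repeat apply Rmin_pos; assumption|].
  intros s Hs Hst.
  pose proof (Rmin_l d (Rmin du dv)); pose proof (Rmin_r d (Rmin du dv)).
  pose proof (Rmin_l du dv); pose proof (Rmin_r du dv).
  apply Hfd; [exact Hs | lra | apply Hud | apply Hvd]; auto; lra.
Qed.

Lemma has_deriv_on_cont_on T u u' : has_deriv_on T u u' -> cont_on T u.
Proof.
  intros H t Ht eps He.
  destruct (H t Ht 1 ltac:(lra)) as [d [Hd Hud]].
  set (B := Rabs (u' t) + 1).
  assert (HB : 0 < B) by (unfold B; pose proof (Rabs_pos (u' t)); lra).
  exists (Rmin d (eps / B)); split; [apply Rmin_pos; [exact Hd | apply Rdiv_lt_0_compat; lra]|].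
  intros s Hs Hst.
  pose proof (Rmin_l d (eps / B)); pose proof (Rmin_r d (eps / B)).
  destruct (Req_dec s t) as [->|Hne]; [rewrite Rminus_diag, Rabs_R0; exact He|].
  set (q := (u s - u t) / (s - t)).
  assert (Hq : Rabs q < B).
  { specialize (Hud s Hs Hne ltac:(lra)); fold q in Hud.
    replace q with ((q - u' t) + u' t) by ring.
    eapply Rle_lt_trans; [apply Rabs_triang | unfold B; lra]. }
  replace (u s - u t) with (q * (s - t)) by (unfold q; field; lra).
  rewrite Rabs_mult.
  apply Rle_lt_trans with (B * Rabs (s - t)).
  - apply Rmult_le_compat_r; [apply Rabs_pos | lra].
  - replace eps with (B * (eps / B)) by (field; lra).
    apply Rmult_lt_compat_l; lra.
Qed.

Lemma supnorm_attained T g : 0 <= T -> cont_on T g ->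
  exists tm, 0 <= tm <= T /\ (forall t, 0 <= t <= T -> Rabs (g t) <= Rabs (g tm)) /\
    supnorm T g = Rabs (g tm).
Proof.
  intros HT Hg.
  assert (Habs : continuity (fun x => Rabs (g (clamp T x)))).
  { apply (cont_on_clamp_continuity T (fun t => Rabs (g t))); [exact HT|].
    apply cont_on_comp_lipschitz; [exact Hg | intros; apply Rabs_triang_inv2]. }
  destruct (continuity_ab_maj _ 0 T HT (fun x _ => Habs x)) as [tm [Hmax Htm]].
  rewrite clamp_id in Hmax by exact Htm.
  assert (Hbound : forall t, 0 <= t <= T -> Rabs (g t) <= Rabs (g tm)).
  { intros t Ht. specialize (Hmax t Ht). rewrite clamp_id in Hmax; assumption. }
  assert (Hlub : is_lub (fun y => exists t, 0 <= t <= T /\ y = Rabs (g t)) (Rabs (g tm))).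
  { split; [intros y [t [Ht ->]]; auto | intros b Hb; apply Hb; exists tm; auto]. }
  exists tm; split; [exact Htm|]; split; [exact Hbound|].
  unfold supnorm. destruct (excluded_middle_informative _) as [H|H].
  - destruct (constructive_indefinite_description _ H) as [s Hs]; simpl.
    exact (is_lub_u _ _ _ Hs Hlub).
  - exfalso; apply H; eauto.
Qed.

Lemma Rabs_le_supnorm T g t : 0 <= T -> cont_on T g -> 0 <= t <= T -> Rabs (g t) <= supnorm T g.
Proof.
  intros HT Hg Ht. destruct (supnorm_attained T g HT Hg) as [tm [_ [Hb ->]]]. auto.
Qed.

Lemma supnorm_lt T g B : 0 <= T -> cont_on T g ->
  (forall t, 0 <= t <= T -> Rabs (g t) < B) -> supnorm T g < B.
Proof.
  intros HT Hg Hb. destruct (supnorm_attained T g HT Hg) as [tm [Htm [_ ->]]]. auto.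
Qed.

Lemma Rabs_RInt_le_RInt_abs T g p q : 0 <= T -> cont_on T g -> 0 <= p <= T -> 0 <= q <= T ->
  Rabs (RInt g p q) <= RInt (fun t => Rabs (g t)) 0 T.
Proof.
  intros HT Hg.
  assert (Hex : forall s t, 0 <= s <= T -> 0 <= t <= T -> ex_RInt (fun x => Rabs (g x)) s t).
  { intros s t Hs Ht. apply (ex_RInt_norm g), (cont_on_ex_RInt T); assumption. }
  assert (Hpos : forall s t, 0 <= s <= t -> t <= T -> 0 <= RInt (fun x => Rabs (g x)) s t).
  { intros s t Hst HtT. apply RInt_ge_0; [lra | apply Hex; lra | intros; apply Rabs_pos]. }
  assert (Hle : forall p q, 0 <= p <= q -> q <= T ->
    Rabs (RInt g p q) <= RInt (fun t => Rabs (g t)) 0 T).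
  { intros p' q' Hpq HqT.
    eapply Rle_trans; [apply abs_RInt_le; [lra | apply (cont_on_ex_RInt T); auto; lra]|].
    assert (C1 := RInt_Chasles _ 0 p' q' (Hex 0 p' ltac:(lra) ltac:(lra))
                                         (Hex p' q' ltac:(lra) ltac:(lra))).
    assert (C2 := RInt_Chasles _ 0 q' T (Hex 0 q' ltac:(lra) ltac:(lra))
                                        (Hex q' T ltac:(lra) ltac:(lra))).
    change (plus ?x ?y) with (x + y) in C1, C2.
    pose proof (Hpos 0 p' ltac:(lra) ltac:(lra)); pose proof (Hpos q' T ltac:(lra) ltac:(lra)).
    lra. }
  intros Hp Hq. destruct (Rle_dec p q) as [h|h]; [apply Hle; lra|].
  rewrite <- (opp_RInt_swap g q p) by (apply (cont_on_ex_RInt T); assumption).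
  change (opp ?x) with (- x). rewrite Rabs_Ropp. apply Hle; lra.
Qed.

Lemma RInt_abs_le_of_RInt_eq0 T g m : 0 <= T -> ex_RInt g 0 T -> ex_RInt m 0 T ->
  RInt g 0 T = 0 -> (forall t, 0 <= t <= T -> 0 <= m t /\ - m t <= g t) ->
  RInt (fun t => Rabs (g t)) 0 T <= 2 * RInt m 0 T.
Proof.
  intros HT Hg Hm Hg0 Hgm.
  assert (Hm2 : ex_RInt (fun t => 2 * m t) 0 T) by exact (ex_RInt_scal m 0 T 2 Hm).
  assert (Hsum : RInt (fun t => g t + 2 * m t) 0 T = 2 * RInt m 0 T).
  { rewrite (RInt_plus g (fun t => 2 * m t)) by assumption.
    change (plus ?x ?y) with (x + y). rewrite Hg0, Rplus_0_l.
    exact (RInt_scal m 0 T 2 Hm). }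
  rewrite <- Hsum.
  apply RInt_le;
    [exact HT | apply (ex_RInt_norm g); exact Hg | apply (ex_RInt_plus g); assumption |].
  intros t Ht. destruct (Hgm t ltac:(lra)).
  unfold Rabs; destruct Rcase_abs; lra.
Qed.

Lemma interval_point_near T t d : 0 < T -> 0 <= t <= T -> 0 < d ->
  exists s, 0 <= s <= T /\ s <> t /\ Rabs (s - t) < d.
Proof.
  intros HT Ht Hd.
  assert (He : exists e, 0 < e /\ e < d /\ 2 * e <= T).
  { exists (Rmin d T / 2).
    pose proof (Rmin_pos d T Hd HT); pose proof (Rmin_l d T); pose proof (Rmin_r d T); lra. }
  destruct He as [e [He0 [Hed HeT]]]. destruct (Rle_dec (t + e) T).
  - exists (t + e). replace (t + e - t) with e by ring. rewrite Rabs_right by lra. lra.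
  - exists (t - e). replace (t - e - t) with (- e) by ring.
    rewrite Rabs_Ropp, Rabs_right by lra. lra.
Qed.

Lemma has_deriv_on_unique T u v1 v2 : 0 < T -> has_deriv_on T u v1 -> has_deriv_on T u v2 ->
  forall t, 0 <= t <= T -> v1 t = v2 t.
Proof.
  intros HT H1 H2 t Ht.
  destruct (Req_dec (v1 t) (v2 t)) as [E|E]; [exact E|exfalso].
  set (e := Rabs (v1 t - v2 t)).
  assert (He : 0 < e) by (apply Rabs_pos_lt; lra).
  destruct (H1 t Ht (e / 2) ltac:(lra)) as [d1 [Hd1 Hq1]].
  destruct (H2 t Ht (e / 2) ltac:(lra)) as [d2 [Hd2 Hq2]].
  destruct (interval_point_near T t (Rmin d1 d2) HT Ht (Rmin_pos _ _ Hd1 Hd2))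
    as [s [Hs [Hne Hst]]].
  pose proof (Rmin_l d1 d2); pose proof (Rmin_r d1 d2).
  specialize (Hq1 s Hs Hne ltac:(lra)); specialize (Hq2 s Hs Hne ltac:(lra)).
  set (q := (u s - u t) / (s - t)) in Hq1, Hq2.
  assert (e <= Rabs (q - v1 t) + Rabs (q - v2 t)).
  { unfold e. replace (v1 t - v2 t) with (- (q - v1 t) + (q - v2 t)) by ring.
    rewrite <- (Rabs_Ropp (q - v1 t)). apply Rabs_triang. }
  lra.
Qed.

Lemma has_deriv_on_ext T u v k :
  (forall t, 0 <= t <= T -> u t = v t) -> has_deriv_on T v k -> has_deriv_on T u k.
Proof.
  intros E Hv t Ht eps He. destruct (Hv t Ht eps He) as [d [Hd Hvd]].
  exists d; split; [exact Hd|]. intros s Hs. rewrite !E by assumption. auto.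
Qed.

Lemma has_deriv_on_RInt T k C : 0 <= T -> cont_on T k ->
  has_deriv_on T (fun t => C + RInt k 0 t) k.
Proof.
  intros HT Hk.
  set (g := fun x => k (clamp T x)).
  assert (Hg : continuity g) by (apply cont_on_clamp_continuity; assumption).
  apply has_deriv_on_ext with (v := fun t => C + RInt g 0 t).
  { intros t Ht. f_equal. apply RInt_ext. intros x Hx. unfold g; rewrite clamp_id; [reflexivity|].
    unfold Rmin, Rmax in Hx; destruct Rle_dec in Hx; lra. }
  intros t Ht eps He.
  assert (Hd : derivable_pt_lim (RInt g 0) t (k t)).
  { apply is_derive_Reals.
    replace (k t) with (g t) by (unfold g; rewrite clamp_id; auto).
    apply (is_derive_RInt g (RInt g 0) 0 t).
    - apply filter_forall. intros b. apply (@RInt_correct R_CompleteNormedModule).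
      apply (@ex_RInt_continuous R_CompleteNormedModule). intros z _.
      apply continuity_pt_filterlim, Hg.
    - apply continuity_pt_filterlim, Hg. }
  destruct (Hd eps He) as [d Hdd].
  exists d; split; [apply cond_pos|]. intros s Hs Hne Hst.
  specialize (Hdd (s - t) ltac:(lra) Hst). replace (t + (s - t)) with s in Hdd by ring.
  replace (C + RInt g 0 s - (C + RInt g 0 t)) with (RInt g 0 s - RInt g 0 t) by ring.
  exact Hdd.
Qed.

Definition strictly_between (x y z : R) : Prop := y < x < z \/ z < x < y.

Lemma Rabs_lt_Rmax_strictly_between x y z :
  strictly_between x y z -> Rabs x < Rmax (Rabs y) (Rabs z).
Proof.
  unfold strictly_between, Rmax; intros H; destruct Rle_dec as [h|h]; revert h;
    unfold Rabs; repeat destruct Rcase_abs; lra.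
Qed.

Lemma cont_on_IVT T g s t v : 0 <= T -> cont_on T g -> 0 <= s <= T -> 0 <= t <= T ->
  Rmin (g s) (g t) <= v <= Rmax (g s) (g t) -> exists x, 0 <= x <= T /\ g x = v.
Proof.
  intros HT Hg Hs Ht Hv.
  set (h := fun x => g (clamp T x)).
  assert (Hh : forall x, continuous h x).
  { intros x; apply continuity_pt_filterlim, cont_on_clamp_continuity; assumption. }
  assert (Hv' : Rmin (h s) (h t) <= v <= Rmax (h s) (h t))
    by (unfold h; rewrite !clamp_id by assumption; exact Hv).
  destruct (IVT_gen_consistent h s t v Hh Hv') as [x [Hx Hhx]].
  assert (Hx' : 0 <= x <= T)
    by (unfold Rmin, Rmax in Hx; destruct Rle_dec in Hx; lra).
  exists x; split; [exact Hx'|]. unfold h in Hhx; rewrite clamp_id in Hhx; assumption.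
Qed.

Lemma cont_on_exists_strictly_between T g M1 M2 : 0 <= T -> cont_on T g -> M1 < M2 ->
  ~ (forall t, 0 <= t <= T -> M2 <= g t) -> ~ (forall t, 0 <= t <= T -> g t <= M1) ->
  exists tau, 0 <= tau <= T /\ M1 < g tau < M2.
Proof.
  intros HT Hg HM Hlow Hhigh.
  assert (Ht0 : exists t0, 0 <= t0 <= T /\ g t0 < M2).
  { apply NNPP; intros Hn; apply Hlow; intros t Ht.
    apply Rnot_lt_le; intros Hlt; apply Hn; eauto. }
  assert (Ht1 : exists t1, 0 <= t1 <= T /\ M1 < g t1).
  { apply NNPP; intros Hn; apply Hhigh; intros t Ht.
    apply Rnot_lt_le; intros Hlt; apply Hn; eauto. }
  destruct Ht0 as [t0 [Ht0 Hg0]], Ht1 as [t1 [Ht1 Hg1]].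
  destruct (Rlt_dec M1 (g t0)); [exists t0; auto|].
  destruct (Rlt_dec (g t1) M2); [exists t1; auto|].
  destruct (cont_on_IVT T g t0 t1 ((M1 + M2) / 2) HT Hg Ht0 Ht1) as [x [Hx Hgx]].
  { unfold Rmin, Rmax; destruct Rle_dec; lra. }
  exists x; split; [exact Hx | lra].
Qed.

Lemma continuous_injective_lt_between g p q r :
  continuity g -> (forall x y, g x = g y -> x = y) ->
  p < q < r -> g p < g r -> g p < g q < g r.
Proof.
  intros Hg Hinj Hpqr Hpr.
  assert (Hivt : forall a b v, a <= b -> Rmin (g a) (g b) <= v <= Rmax (g a) (g b) ->
                   exists s, a <= s <= b /\ g s = v).
  { intros a b v Hab Hv.
    destruct (IVT_gen_consistent g a b v
                (fun x => proj1 (continuity_pt_filterlim _ _) (Hg x)) Hv) as [s [Hs Es]].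
    exists s; split; [|exact Es]. unfold Rmin, Rmax in Hs; destruct Rle_dec in Hs; lra. }
  split; apply Rnot_le_lt; intros Hle.
  - destruct (Hivt q r (g p)) as [s [Hs Es]]; [lra | unfold Rmin, Rmax; destruct Rle_dec; lra |].
    apply Hinj in Es; lra.
  - destruct (Hivt p q (g r)) as [s [Hs Es]]; [lra | unfold Rmin, Rmax; destruct Rle_dec; lra |].
    apply Hinj in Es; lra.
Qed.

Section ContinuousInjective.

Variable phi : R -> R.
Hypotheses (hphi_cont : continuity phi) (hphi_inj : forall x y, phi x = phi y -> x = y).

Lemma continuous_injective_strictly_between x y z :
  strictly_between y x z -> strictly_between (phi y) (phi x) (phi z).
Proof.
  assert (Hlt : forall p q r, p < q < r -> strictly_between (phi q) (phi p) (phi r)).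
  { intros p q r Hpqr.
    destruct (Rtotal_order (phi p) (phi r)) as [h|[h|h]].
    - left; apply continuous_injective_lt_between; assumption.
    - apply hphi_inj in h; lra.
    - right.
      assert (H := continuous_injective_lt_between (fun x => - phi x) p q r
                     (continuity_opp _ hphi_cont)
                     (fun x y E => hphi_inj x y ltac:(lra)) Hpqr ltac:(lra)).
      simpl in H; lra. }
  unfold strictly_between at 1; intros [H|H].
  - apply Hlt; exact H.
  - destruct (Hlt z y x H); [right|left]; lra.
Qed.

Lemma continuous_injective_strictly_between_inv x y z :
  strictly_between (phi y) (phi x) (phi z) -> strictly_between y x z.
Proof.
  intros H.
  assert (x <> y) by (intros ->; unfold strictly_between in H; lra).
  assert (y <> z) by (intros ->; unfold strictly_between in H; lra).
  assert (x <> z) by (intros ->; unfold strictly_between in H; lra).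
  unfold strictly_between at 1.
  destruct (Rlt_dec x y), (Rlt_dec y z), (Rlt_dec x z);
    first [ left; lra | right; lra | exfalso ];
    unfold strictly_between in H;
    first [ destruct (continuous_injective_strictly_between z x y
                        ltac:(unfold strictly_between; lra)); lra
          | destruct (continuous_injective_strictly_between x z y
                        ltac:(unfold strictly_between; lra)); lra ].
Qed.

End ContinuousInjective.

Section FixedPoint.

Variables (T a lam : R) (phi phiinv : R -> R) (f : R -> R -> R -> R) (u u' : R -> R).
Hypotheses (hT : 0 < T) (hf : cont3_on T f) (hu : C1_on T u u')
  (hphi_left : forall x, phiinv (phi x) = x)
  (hphi_right : forall y, - a < y < a -> phi (phiinv y) = y)
  (hphiinv_cont : forall y, - a < y < a -> continuity_pt phiinv y)
  (hOmega : supnorm T (Wop T phi f lam u u') < a)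
  (hfix : forall t, 0 <= t <= T -> u t = Mop T phi phiinv f lam u u' t).

Local Notation N := (Nf f u u').
Local Notation w := (Wop T phi f lam u u').

Lemma Nf_cont_on : cont_on T N.
Proof.
  destruct hu as [hd hc].
  exact (cont3_on_comp T f u u' hf (has_deriv_on_cont_on T u u' hd) hc).
Qed.

Lemma Nf_ex_RInt s t : 0 <= s <= T -> 0 <= t <= T -> ex_RInt N s t.
Proof. apply cont_on_ex_RInt; [lra | exact Nf_cont_on]. Qed.

Lemma Qop_Nf_fixed_point : Qop T N = 0.
Proof.
  specialize (hfix 0 ltac:(lra)). unfold Mop, Hop in hfix. rewrite integ_point in hfix.
  unfold Pop in hfix; lra.
Qed.

Lemma integ_Nf_fixed_point : integ N 0 T = 0.
Proof.
  pose proof Qop_Nf_fixed_point as HQ; unfold Qop in HQ.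
  apply Rmult_integral in HQ; destruct HQ as [HQ|HQ]; [|exact HQ].
  exfalso; apply (Rinv_neq_0_compat T); lra.
Qed.

Lemma RInt_Nf_fixed_point : RInt N 0 T = 0.
Proof. rewrite <- integ_RInt by (apply Nf_ex_RInt; lra). exact integ_Nf_fixed_point. Qed.

Lemma Wop_fixed_point t : 0 <= t <= T -> w t = phi (u 0) + lam * RInt N 0 t.
Proof.
  intros Ht. unfold Wop, Hop, Pop. rewrite Qop_Nf_fixed_point, integ_RInt.
  - rewrite (RInt_ext (V := R_CompleteNormedModule) _ N) by (intros; apply Rminus_0_r). ring.
  - apply (ex_RInt_ext (V := R_CompleteNormedModule) N);
      [intros; symmetry; apply Rminus_0_r | apply Nf_ex_RInt; lra].
Qed.

Lemma Wop_cont_on : cont_on T w.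
Proof.
  apply cont_on_ext with (g := fun t => phi (u 0) + lam * RInt N 0 t);
    [intros; symmetry; apply Wop_fixed_point; assumption|].
  apply (cont_on_comp T (RInt N 0) (fun y => phi (u 0) + lam * y)); [|intros; reg].
  apply (has_deriv_on_cont_on T _ N).
  apply has_deriv_on_ext with (v := fun t => 0 + RInt N 0 t); [intros; symmetry; apply Rplus_0_l|].
  apply has_deriv_on_RInt; [lra | exact Nf_cont_on].
Qed.

Lemma Wop_bounded t : 0 <= t <= T -> - a < w t < a.
Proof.
  intros Ht. apply Rabs_lt_between.
  eapply Rle_lt_trans; [|exact hOmega].
  apply (Rabs_le_supnorm T w t); [lra | exact Wop_cont_on | exact Ht].
Qed.

Lemma phiinv_Wop_cont_on : cont_on T (fun t => phiinv (w t)).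
Proof.
  apply cont_on_comp; [exact Wop_cont_on | intros; apply hphiinv_cont, Wop_bounded; assumption].
Qed.

Lemma deriv_fixed_point t : 0 <= t <= T -> u' t = phiinv (w t).
Proof.
  apply (has_deriv_on_unique T u u' (fun t => phiinv (w t))); [exact hT | exact (proj1 hu) |].
  apply has_deriv_on_ext with (v := fun t => u 0 + RInt (fun s => phiinv (w s)) 0 t).
  - intros s Hs. rewrite (hfix s Hs). unfold Mop, Hop, Pop.
    rewrite Qop_Nf_fixed_point, integ_RInt; [ring|].
    apply (cont_on_ex_RInt T); [lra | exact phiinv_Wop_cont_on | lra | exact Hs].
  - apply has_deriv_on_RInt; [lra | exact phiinv_Wop_cont_on].
Qed.

Lemma phi_deriv_fixed_point t : 0 <= t <= T -> phi (u' t) = w t.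
Proof. intros Ht. rewrite deriv_fixed_point by exact Ht. apply hphi_right, Wop_bounded, Ht. Qed.

Lemma deriv_0_fixed_point : u' 0 = u 0.
Proof.
  rewrite deriv_fixed_point, Wop_fixed_point by lra.
  rewrite (@RInt_point R_CompleteNormedModule). change (@zero R_CompleteNormedModule) with 0.
  rewrite Rmult_0_r, Rplus_0_r. apply hphi_left.
Qed.

Lemma fixed_point_RInt_deriv t : 0 <= t <= T -> u t = u 0 + RInt u' 0 t.
Proof.
  intros Ht. rewrite (hfix t Ht). unfold Mop, Hop, Pop.
  rewrite Qop_Nf_fixed_point, integ_RInt.
  - rewrite (RInt_ext (V := R_CompleteNormedModule) _ u'); [ring|].
    intros x Hx. symmetry; apply deriv_fixed_point.
    unfold Rmin, Rmax in Hx; destruct Rle_dec in Hx; lra.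
  - apply (cont_on_ex_RInt T); [lra | exact phiinv_Wop_cont_on | lra | exact Ht].
Qed.

Hypothesis hlam : 0 <= lam <= 1.

Lemma Wop_oscillation s t : 0 <= s <= T -> 0 <= t <= T ->
  Rabs (w t - w s) <= RInt (fun x => Rabs (N x)) 0 T.
Proof.
  intros Hs Ht. rewrite !Wop_fixed_point by assumption.
  replace (phi (u 0) + lam * RInt N 0 t - (phi (u 0) + lam * RInt N 0 s))
    with (lam * (RInt N 0 t - RInt N 0 s)) by ring.
  rewrite <- (RInt_Chasles N 0 s t (Nf_ex_RInt 0 s ltac:(lra) Hs) (Nf_ex_RInt s t Hs Ht)).
  change (plus ?x ?y) with (x + y). rewrite Rabs_mult, (Rabs_right lam) by lra.
  rewrite Rplus_minus_l.
  apply Rle_trans with (1 * Rabs (RInt N s t)).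
  - apply Rmult_le_compat_r; [apply Rabs_pos | lra].
  - rewrite Rmult_1_l.
    apply (Rabs_RInt_le_RInt_abs T); [lra | exact Nf_cont_on | exact Hs | exact Ht].
Qed.

Variables (M1 M2 : R) (c : R -> R).
Hypotheses (hphi_cont : continuity phi) (hM : M1 < M2)
  (H1a : forall u u' : R -> R, C1_on T u u' ->
           (forall t, 0 <= t <= T -> M2 <= u' t) -> integ (Nf f u u') 0 T <> 0)
  (H1b : forall u u' : R -> R, C1_on T u u' ->
           (forall t, 0 <= t <= T -> u' t <= M1) -> integ (Nf f u u') 0 T <> 0)
  (hc : cont_on T c) (hfc : forall t x y, 0 <= t <= T -> c t <= f t x y).

Lemma phi_injective x y : phi x = phi y -> x = y.
Proof. intros E. rewrite <- (hphi_left x), <- (hphi_left y), E. reflexivity. Qed.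

Lemma exists_deriv_strictly_between : exists tau, 0 <= tau <= T /\ M1 < u' tau < M2.
Proof.
  apply cont_on_exists_strictly_between; [lra | exact (proj2 hu) | exact hM | |];
    intros H; [apply (H1a u u') | apply (H1b u u')]; auto; exact integ_Nf_fixed_point.
Qed.

Lemma RInt_abs_Nf_le :
  RInt (fun t => Rabs (N t)) 0 T <= 2 * integ (fun t => Rmax (- c t) 0) 0 T.
Proof.
  assert (hcm : cont_on T (fun t => Rmax (- c t) 0)).
  { apply (cont_on_comp_lipschitz T c (fun y => Rmax (- y) 0)); [exact hc|].
    intros x y; unfold Rmax; repeat destruct Rle_dec; unfold Rabs; repeat destruct Rcase_abs; lra. }
  rewrite integ_RInt by (apply (cont_on_ex_RInt T); [lra | exact hcm | lra | lra]).
  apply RInt_abs_le_of_RInt_eq0;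
    [lra | apply Nf_ex_RInt; lra | apply (cont_on_ex_RInt T); [lra | exact hcm | lra | lra]
    | exact RInt_Nf_fixed_point |].
  intros t Ht. split; [apply Rmax_r|].
  pose proof (hfc t (u t) (u' t) Ht). unfold Nf, Rmax; destruct Rle_dec; lra.
Qed.

Lemma Wop_lt t : 0 <= t <= T ->
  Rabs (w t) < Rmax (Rabs (phi M2)) (Rabs (phi M1)) + 2 * integ (fun t => Rmax (- c t) 0) 0 T.
Proof.
  intros Ht. destruct exists_deriv_strictly_between as [tau [Htau Hu'tau]].
  assert (Hwtau : Rabs (w tau) < Rmax (Rabs (phi M2)) (Rabs (phi M1))).
  { rewrite <- phi_deriv_fixed_point by exact Htau.
    apply Rabs_lt_Rmax_strictly_between, continuous_injective_strictly_between;
      [exact hphi_cont | exact phi_injective | right; exact Hu'tau]. }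
  pose proof (Wop_oscillation tau t Htau Ht). pose proof RInt_abs_Nf_le.
  replace (w t) with (w tau + (w t - w tau)) by ring.
  eapply Rle_lt_trans; [apply Rabs_triang | lra].
Qed.

Lemma deriv_lt K : K < a -> (forall t, 0 <= t <= T -> Rabs (w t) < K) ->
  forall t, 0 <= t <= T -> Rabs (u' t) < Rmax (Rabs (phiinv K)) (Rabs (phiinv (- K))).
Proof.
  intros HKa HwK t Ht. specialize (HwK t Ht).
  pose proof (Rabs_pos (w t)). apply Rabs_lt_between in HwK.
  apply Rabs_lt_Rmax_strictly_between.
  apply (continuous_injective_strictly_between_inv phi hphi_cont phi_injective).
  rewrite phi_deriv_fixed_point, !hphi_right by (assumption || lra).
  right; lra.
Qed.

Lemma fixed_point_lt r : (forall t, 0 <= t <= T -> Rabs (u' t) < r) ->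
  forall t, 0 <= t <= T -> Rabs (u t) < r + T * r.
Proof.
  intros Hr t Ht.
  assert (Hr0 : 0 <= r) by (pose proof (Hr 0 ltac:(lra)); pose proof (Rabs_pos (u' 0)); lra).
  assert (HI : Rabs (RInt u' 0 t) <= (t - 0) * r).
  { apply abs_RInt_le_const;
      [lra | apply (cont_on_ex_RInt T); [lra | exact (proj2 hu) | lra | exact Ht] |].
    intros s Hs. left; apply Hr; lra. }
  assert (Ht0 : (t - 0) * r <= T * r) by (apply Rmult_le_compat_r; lra).
  pose proof (Hr 0 ltac:(lra)) as Hu0. rewrite deriv_0_fixed_point in Hu0.
  rewrite fixed_point_RInt_deriv by exact Ht.
  eapply Rle_lt_trans; [apply Rabs_triang | lra].
Qed.

End FixedPoint.

Theorem lemma3p2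
  (T a : R) (hT : 0 < T) (ha : 0 < a)
  (phi phiinv : R -> R)
  (hphi_range : forall x, - a < phi x < a)
  (hphi_cont : continuity phi)
  (hphi_left : forall x, phiinv (phi x) = x)
  (hphi_right : forall y, - a < y < a -> phi (phiinv y) = y)
  (hphiinv_cont : forall y, - a < y < a -> continuity_pt phiinv y)
  (hphi0 : phi 0 = 0)
  (f : R -> R -> R -> R) (hf : cont3_on T f)
  (M1 M2 : R) (hM : M1 < M2)
  (H1a : forall u u' : R -> R, C1_on T u u' ->
           (forall t, 0 <= t <= T -> M2 <= u' t) -> integ (Nf f u u') 0 T <> 0)
  (H1b : forall u u' : R -> R, C1_on T u u' ->
           (forall t, 0 <= t <= T -> u' t <= M1) -> integ (Nf f u u') 0 T <> 0)
  (c : R -> R) (hc : cont_on T c)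
  (hfc : forall t x y, 0 <= t <= T -> c t <= f t x y)
  (hLa : Rmax (Rabs (phi M2)) (Rabs (phi M1))
           + 2 * integ (fun t => Rmax (- c t) 0) 0 T < a)
  (lam : R) (u u' : R -> R)
  (hlam : 0 <= lam <= 1) (hu : C1_on T u u')
  (hOmega : supnorm T (Wop T phi f lam u u') < a)
  (hfix : forall t, 0 <= t <= T -> u t = Mop T phi phiinv f lam u u' t) :
  let L := Rmax (Rabs (phi M2)) (Rabs (phi M1)) in
  let K := L + 2 * integ (fun t => Rmax (- c t) 0) 0 T in
  let r := Rmax (Rabs (phiinv K)) (Rabs (phiinv (- K))) in
  supnorm T (Wop T phi f lam u u') < K /\
  supnorm T u + supnorm T u' < r * (2 + T).
Proof.
  intros L K r.
  assert (HT : 0 <= T) by lra.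
  assert (HwK : forall t, 0 <= t <= T -> Rabs (Wop T phi f lam u u' t) < K)
    by exact (Wop_lt T a lam phi phiinv f u u' hT hf hu hphi_left hphi_right hphiinv_cont
                hOmega hfix hlam M1 M2 c hphi_cont hM H1a H1b hc hfc).
  assert (Hu'r : forall t, 0 <= t <= T -> Rabs (u' t) < r)
    by exact (deriv_lt T a lam phi phiinv f u u' hT hf hu hphi_left hphi_right hphiinv_cont
                hOmega hfix hphi_cont K hLa HwK).
  assert (Hur : forall t, 0 <= t <= T -> Rabs (u t) < r + T * r)
    by exact (fixed_point_lt T a lam phi phiinv f u u' hT hf hu hphi_left hphiinv_cont
                hOmega hfix r Hu'r).
  split.
  - apply supnorm_lt; [exact HT | | exact HwK].
    exact (Wop_cont_on T lam phi phiinv f u u' hT hf hu hfix).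
  - pose proof (supnorm_lt T u' r HT (proj2 hu) Hu'r).
    pose proof (supnorm_lt T u (r + T * r) HT (has_deriv_on_cont_on T u u' (proj1 hu)) Hur).
    lra.
Qed.
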